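(* Let $P=(p_1,\dots,p_n)$ be points in $\mathbb{R}^d$, $\mathcal{F}$ a constraint for $k$-CMeans, and $\mathcal{C}=\{c_1,\dots,c_k\}\subset\mathbb{R}^d$ with $\omega=\frac1n\sum_{i=1}^n\min_{c\in\mathcal{C}}\|p_i-c\|^2$. For each $i$ let $\tilde p_i$ be a point of $\mathcal{C}$ nearest to $p_i$, and let $\tilde P=(\tilde p_1,\dots,\tilde p_n)$. Let $\delta^2_{opt}$ and $\tilde\delta^2_{opt}$ be the optimal $k$-CMeans values of $P$ and $\tilde P$ (with the same $\mathcal{F}$), and let $\delta^2_{opt}([\mathcal{C}]^k)=\min_{(S_j)\in\mathcal{F}}\min_{(q_1,\dots,q_k)\in\mathcal{C}^k}\frac1n\sum_j\sum_{i\in S_j}\|p_i-q_j\|^2$. Then $\tilde\delta^2_{opt}\le 2\omega+2\delta^2_{opt}$ and $\delta^2_{opt}([\mathcal{C}]^k)\le 2\omega+8\tilde\delta^2_{opt}$.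
   Context: A constraint for $k$-CMeans is a nonempty family $\mathcal{F}$ of ordered partitions $(S_1,\dots,S_k)$ of $\{1,\dots,n\}$ into $k$ parts. For a sequence $X=(x_1,\dots,x_n)$ its optimal $k$-CMeans value is $\min_{(S_j)\in\mathcal{F}}\min_{c'_1,\dots,c'_k\in\mathbb{R}^d}\frac1n\sum_j\sum_{i\in S_j}\|x_i-c'_j\|^2$. *)

From HB Require Import structures.
From mathcomp Require Import all_boot all_order all_algebra.
From mathcomp Require Import classical_sets reals.
Set Implicit Arguments. Unset Strict Implicit. Unset Printing Implicit Defensive.
Import Order.TTheory GRing.Theory Num.Theory.
Local Open Scope ring_scope.
Local Open Scope classical_set_scope.

Definition sqnorm (R : realType) (d : nat) (v : 'rV[R]_d) : R :=
  \sum_(l < d) (v ord0 l) ^+ 2.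

(* An ordered partition (S_1,...,S_k) of {1..n} is encoded by the assignment
   s : 'I_n -> 'I_k, with S_j = { i | s i = j }.  A constraint is a nonempty
   set F of such assignments. *)
Definition partition_nk (n k : nat) := {ffun 'I_n -> 'I_k}.

Definition ccost (R : realType) (d n k : nat) (X : 'I_n -> 'rV[R]_d)
  (s : partition_nk n k) (cent : 'I_k -> 'rV[R]_d) : R :=
  n%:R^-1 * \sum_(j < k) \sum_(i < n | s i == j) sqnorm (X i - cent j).

Definition opt_cmeans (R : realType) (d n k : nat) (F : {set partition_nk n k})
  (X : 'I_n -> 'rV[R]_d) : R :=
  inf [set v | exists s cent, s \in F /\ v = ccost X s cent].

Definition opt_cmeans_in (R : realType) (d n k : nat) (F : {set partition_nk n k})
  (X : 'I_n -> 'rV[R]_d) (c : 'I_k -> 'rV[R]_d) : R :=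
  inf [set v | exists s (cent : 'I_k -> 'rV[R]_d),
        [/\ s \in F, (forall j, exists j', cent j = c j') & v = ccost X s cent]].

Definition sqdist_to (R : realType) (d k : nat) (c : 'I_k -> 'rV[R]_d)
  (x : 'rV[R]_d) : R :=
  inf [set v | exists j, v = sqnorm (x - c j)].

(* Both bounds compare costs point by point.  Moving every point to its nearest
   center [Ptil i] costs [omega] on average, and the relaxed triangle inequality
   [|u + v|^2 <= 2|u|^2 + 2|v|^2] transfers any clustering of [P] to [Ptil] and
   back.  For the second bound, each center of a clustering of [Ptil] is replaced
   by its nearest point of [C]; since the points of [Ptil] already lie in [C],
   this at most quadruples the squared distance of each of them to its center. *)
From HB Require Import structures.
From mathcomp Require Import all_boot all_order all_algebra.
From mathcomp Require Import classical_sets reals.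
From mathcomp Require Import lra.
Set Implicit Arguments. Unset Strict Implicit. Unset Printing Implicit Defensive.
Import Order.TTheory GRing.Theory Num.Theory.
Local Open Scope ring_scope.
Local Open Scope classical_set_scope.

Section CMeans.
Variable R : realType.

Section SquaredNorm.
Variable d : nat.
Implicit Types u v w : 'rV[R]_d.

Lemma sqnorm_ge0 v : 0 <= sqnorm v.
Proof. by apply: sumr_ge0 => l _; exact: sqr_ge0. Qed.

Lemma sqnormBC u v : sqnorm (u - v) = sqnorm (v - u).
Proof. by rewrite -opprB /sqnorm; apply: eq_bigr => l _; rewrite mxE sqrrN. Qed.

Lemma sqnormD_le u v : sqnorm (u + v) <= 2 * sqnorm u + 2 * sqnorm v.
Proof.
rewrite /sqnorm !mulr_sumr -big_split /=; apply: ler_sum => l _.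
rewrite mxE; have := sqr_ge0 (u ord0 l - v ord0 l); nra.
Qed.

Lemma sqnormB_le u v w : sqnorm (u - w) <= 2 * sqnorm (u - v) + 2 * sqnorm (v - w).
Proof.
have -> : u - w = (u - v) + (v - w) by rewrite addrA subrK.
exact: sqnormD_le.
Qed.

Lemma sqnormB_le_nearer u v w q :
  sqnorm (w - q) <= sqnorm (w - v) ->
  sqnorm (u - q) <= 2 * sqnorm (u - v) + 8 * sqnorm (v - w).
Proof.
move=> q_nearer.
have := sqnormB_le u v q; have := sqnormB_le v w q.
rewrite [sqnorm (w - v)]sqnormBC in q_nearer; lra.
Qed.

End SquaredNorm.

Lemma sqdist_to_nearest (d k : nat) (c : 'I_k -> 'rV[R]_d) (x y : 'rV[R]_d) :
  (exists j, y = c j) -> (forall j, sqnorm (x - y) <= sqnorm (x - c j)) ->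
  sqdist_to c x = sqnorm (x - y).
Proof.
move=> [j0 ->] nearest; apply/eqP; rewrite eq_le; apply/andP; split.
- by apply: ge_inf; [exists 0 => _ [j ->]; exact: sqnorm_ge0 | exists j0].
- by apply: lb_le_inf; [exists (sqnorm (x - c j0)), j0 | move=> _ [j ->]].
Qed.

Lemma nearest_center (d k : nat) (c cent : 'I_k -> 'rV[R]_d) :
  exists a : 'I_k -> 'I_k,
    forall j j', sqnorm (cent j - c (a j)) <= sqnorm (cent j - c j').
Proof.
exists (fun j => Order.arg_min j xpredT (fun j' => sqnorm (cent j - c j'))) => j j'.
by case: arg_minP => // a _; apply.
Qed.

Section Cost.
Variables (d n k : nat).
Implicit Types (X Y : 'I_n -> 'rV[R]_d) (s : partition_nk n k).

Lemma ccost_ge0 X s (cent : 'I_k -> 'rV[R]_d) : 0 <= ccost X s cent.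
Proof.
apply: mulr_ge0; first by rewrite invr_ge0 ler0n.
by do 2![apply: sumr_ge0 => ? _]; exact: sqnorm_ge0.
Qed.

Lemma ccost_le_pointwise X Y s (a b : 'I_k -> 'rV[R]_d) (e : 'I_n -> R) (alpha beta : R) :
  (forall i j, sqnorm (X i - a j) <= alpha * e i + beta * sqnorm (Y i - b j)) ->
  ccost X s a <= alpha * (n%:R^-1 * \sum_(i < n) e i) + beta * ccost Y s b.
Proof.
move=> pointwise; rewrite /ccost !(mulrCA _ n%:R^-1) -mulrDr.
rewrite ler_wpM2l ?invr_ge0 ?ler0n // (partition_big s xpredT) //=.
rewrite !mulr_sumr -big_split; apply: ler_sum => j _.
by rewrite !mulr_sumr -big_split; apply: ler_sum => i _.
Qed.

Variable F : {set partition_nk n k}.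

Lemma opt_cmeans_le X s cent : s \in F -> opt_cmeans F X <= ccost X s cent.
Proof.
move=> sF; apply: ge_inf; last by exists s, cent.
by exists 0 => _ [? [? [_ ->]]]; exact: ccost_ge0.
Qed.

Lemma opt_cmeans_in_le X (c : 'I_k -> 'rV[R]_d) s (a : 'I_k -> 'I_k) :
  s \in F -> opt_cmeans_in F X c <= ccost X s (c \o a).
Proof.
move=> sF; apply: ge_inf; last by exists s, (c \o a); split => // j; exists (a j).
by exists 0 => _ [? [? [_ _ ->]]]; exact: ccost_ge0.
Qed.

Lemma le_opt_cmeans X (x y be : R) : F != finset.set0 -> 0 < be ->
  (forall s cent, s \in F -> x <= y + be * ccost X s cent) ->
  x <= y + be * opt_cmeans F X.
Proof.
case/set0Pn=> s0 s0F be_gt0 bound.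
rewrite -lerBlDl -ler_pdivrMl //; apply: lb_le_inf.
  by exists (ccost X s0 (fun=> 0)), s0, (fun=> 0).
move=> _ [s [cent [sF ->]]].
by rewrite ler_pdivrMl // lerBlDl; exact: bound.
Qed.

End Cost.
End CMeans.

Theorem lemma8 (R : realType) (d n k : nat)
  (P : 'I_n -> 'rV[R]_d) (F : {set partition_nk n k}) (HF : F != finset.set0)
  (c : 'I_k -> 'rV[R]_d) (Ptil : 'I_n -> 'rV[R]_d)
  (HPtilC : forall i, exists j, Ptil i = c j)
  (HPtilmin : forall i j, sqnorm (P i - Ptil i) <= sqnorm (P i - c j)) :
  let omega := n%:R^-1 * \sum_(i < n) sqdist_to c (P i) in
  opt_cmeans F Ptil <= 2 * omega + 2 * opt_cmeans F P /\
  opt_cmeans_in F P c <= 2 * omega + 8 * opt_cmeans F Ptil.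
Proof.
move=> omega.
have omegaE : omega = n%:R^-1 * \sum_(i < n) sqnorm (P i - Ptil i).
  by congr (_ * _); apply: eq_bigr => i _; apply: sqdist_to_nearest.
rewrite omegaE; split; apply: le_opt_cmeans => // s cent sF.
- apply: le_trans; first exact: opt_cmeans_le cent sF.
  apply: ccost_le_pointwise => i j.
  by rewrite [sqnorm (P i - _)]sqnormBC sqnormB_le.
- have [a nearest] := nearest_center c cent.
  apply: le_trans; first exact: opt_cmeans_in_le _ _ a sF.
  apply: ccost_le_pointwise => i j.
  have [j' ->] := HPtilC i.
  exact: sqnormB_le_nearer (nearest j j').
Qed.
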